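(* Let $\mathbb A=(A_n)_{n\in\mathbb Z^+}$ be a sequence of invertible linear operators on $\mathbb R^d$ and $\mathcal S=\{\|\cdot\|_n;\ n\in\mathbb Z^+\}$ a sequence of norms such that there exist $K,a>0$ with $\|\mathcal A(m,n)x\|_m\le Ke^{a(m-n)}\|x\|_n$ and $\|\mathcal A(n,m)x\|_n\le Ke^{a(m-n)}\|x\|_m$ for all $m\ge n$, $x$. Let $\Sigma=\Sigma_{ED,\mathbb A,\mathcal S}$. Then $\Sigma$ is closed in $(0,\infty)$. Moreover, for every $r\in(0,\infty)\setminus\Sigma$ there is an open interval $I\ni r$ such that $S_r(n)=S_{r'}(n)$ for all $n\in\mathbb Z^+$ and all $r'\in I$.
   Context: $\mathbb Z^+=\{0,1,\dots\}$. $\mathcal A(m,n)=A_{m-1}\cdots A_n$ ($m>n$), $\mathrm{Id}$ ($m=n$), $A_m^{-1}\cdots A_{n-1}^{-1}$ ($m<n$). For $r>0$, $n\in\mathbb Z^+$: $S_r(n)=\{v\in\mathbb R^d:\ \sup_{m\ge n}r^{-(m-n)}\|\mathcal A(m,n)v\|_m<+\infty\}$. A sequence $(C_n)_{n\in\mathbb Z^+}$ with cocycle $\mathcal C$ admits a strong exponential dichotomy w.r.t. $\mathcal S$ if there exist $K>0$, $a\ge\lambda>0$ and projections $P_n$ with $C_nP_n=P_{n+1}C_n$ such that for $m\ge n$, $x$, $Q_m=\mathrm{Id}-P_m$: $\|\mathcal C(m,n)P_nx\|_m\le Ke^{-\lambda(m-n)}\|x\|_n$, $\|\mathcal C(n,m)Q_mx\|_n\le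 Ke^{-\lambda(m-n)}\|x\|_m$, $\|\mathcal C(m,n)x\|_m\le Ke^{a(m-n)}\|x\|_n$, $\|\mathcal C(n,m)x\|_n\le Ke^{a(m-n)}\|x\|_m$. $\Sigma_{ED,\mathbb A,\mathcal S}$: set of $\tau>0$ such that $(\tau^{-1}A_n)_{n\in\mathbb Z^+}$ does not admit a strong exponential dichotomy w.r.t. $\mathcal S$. *)

From HB Require Import structures.
From mathcomp Require Import all_boot all_order all_algebra.
From mathcomp Require Import classical_sets reals sequences exp.
Set Implicit Arguments. Unset Strict Implicit. Unset Printing Implicit Defensive.
Import Order.TTheory GRing.Theory Num.Theory.
Local Open Scope ring_scope.
Local Open Scope classical_set_scope.

Section Defs.
Variables (R : realType) (d : nat).

Definition is_norm (N : 'cV[R]_d -> R) : Prop :=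
  [/\ forall v, 0 <= N v,
      forall v, N v = 0 -> v = 0,
      forall (c : R) v, N (c *: v) = `|c| * N v
    & forall u v, N (u + v) <= N u + N v].

Fixpoint fwd (A : nat -> 'M[R]_d) (n k : nat) : 'M[R]_d :=
  if k is k'.+1 then A (n + k')%N *m fwd A n k' else 1%:M.

Fixpoint bwd (A : nat -> 'M[R]_d) (m k : nat) : 'M[R]_d :=
  if k is k'.+1 then bwd A m k' *m invmx (A (m + k')%N) else 1%:M.

Definition cocycle (A : nat -> 'M[R]_d) (m n : nat) : 'M[R]_d :=
  if (n <= m)%N then fwd A n (m - n) else bwd A m (n - m).

Definition Sr (A : nat -> 'M[R]_d) (N : nat -> 'cV[R]_d -> R) (r : R) (n : nat)
  : set 'cV[R]_d :=
  [set v | exists C : R, forall m : nat, (n <= m)%N ->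
      r ^- (m - n) * N m (cocycle A m n *m v) <= C].

Definition strong_exp_dichotomy (C : nat -> 'M[R]_d) (N : nat -> 'cV[R]_d -> R)
  : Prop :=
  exists (K a lam : R) (P : nat -> 'M[R]_d),
    [/\ 0 < K /\ 0 < lam /\ lam <= a,
        forall n, P n *m P n = P n,
        forall n, C n *m P n = P n.+1 *m C n &
        forall (m n : nat) (x : 'cV[R]_d), (n <= m)%N ->
          [/\ N m (cocycle C m n *m (P n *m x))
                <= K * expR (- lam * (m - n)%:R) * N n x,
              N n (cocycle C n m *m ((1%:M - P m) *m x))
                <= K * expR (- lam * (m - n)%:R) * N m x,
              N m (cocycle C m n *m x) <= K * expR (a * (m - n)%:R) * N n x &
              N n (cocycle C n m *m x) <= K * expR (a * (m - n)%:R) * N m x]].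

Definition SigmaED (A : nat -> 'M[R]_d) (N : nat -> 'cV[R]_d -> R) : set R :=
  [set tau | 0 < tau /\ ~ strong_exp_dichotomy (fun n => tau^-1 *: A n) N].

End Defs.

From HB Require Import structures.
From mathcomp Require Import all_boot all_order all_algebra.
From mathcomp Require Import classical_sets reals sequences exp.
From mathcomp Require Import ring lra.
Import Order.TTheory GRing.Theory Num.Theory.
Local Open Scope ring_scope.
Local Open Scope classical_set_scope.
Set Implicit Arguments. Unset Strict Implicit. Unset Printing Implicit Defensive.

(* If (r^-1 A_n) admits a strong exponential dichotomy with projections P_n
   and rate lam, then multiplying the sequence by r/r' with
   |ln (r'/r)| < lam/2 costs at most lam/2 in every exponent, so
   (r'^-1 A_n) admits one with the same projections: the complement of Sigma
   is open.  Moreover S_r'(n) is the set of vectors whose orbit under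
   (r'^-1 A_n) is bounded, and this set is ker (1 - P_n): the unstable part of
   a bounded orbit is at most K e^(-lam k) B for every k.  Since P_n does not
   depend on r', S_r'(n) is constant near r. *)

Section Cocycle.
Variables (R : realType) (d : nat).
Implicit Types (C : nat -> 'M[R]_d) (N : nat -> 'cV[R]_d -> R).

Lemma fwdZ C (s : R) n k :
  fwd (fun j => s *: C j) n k = s ^+ k *: fwd C n k.
Proof.
elim: k => [|k IH] /=; first by rewrite expr0 scale1r.
by rewrite IH -scalemxAr -scalemxAl scalerA exprSr mulrC.
Qed.

Lemma bwdZ C (s : R) m k : s != 0 -> (forall j, C j \in unitmx) ->
  bwd (fun j => s *: C j) m k = s^-1 ^+ k *: bwd C m k.
Proof.
move=> s0 CU; elim: k => [|k IH] /=; first by rewrite expr0 scale1r.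
rewrite IH invmxZ; last by rewrite unitmxZ ?CU // unitfE.
by rewrite -scalemxAl -scalemxAr scalerA exprSr.
Qed.

Lemma cocycle_fwd C m n : (n <= m)%N -> cocycle C m n = fwd C n (m - n).
Proof. by rewrite /cocycle => ->. Qed.

Lemma cocycle_bwd C m n : (n <= m)%N -> cocycle C n m = bwd C n (m - n).
Proof.
rewrite /cocycle leq_eqVlt => /orP[/eqP->|nm]; first by rewrite leqnn subnn.
by rewrite leqNgt nm.
Qed.

Lemma mul_bwd_fwd C n k : (forall j, C j \in unitmx) ->
  bwd C n k *m fwd C n k = 1%:M.
Proof.
move=> CU; elim: k => [|k IH] /=; first by rewrite mulmx1.
by rewrite mulmxA -(mulmxA _ (invmx _)) mulVmx ?CU // mulmx1 IH.
Qed.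

Lemma fwd_intertwine C (P : nat -> 'M[R]_d) n k :
  (forall j, C j *m P j = P j.+1 *m C j) ->
  fwd C n k *m P n = P (n + k)%N *m fwd C n k.
Proof.
move=> CP; elim: k => [|k IH] /=; first by rewrite addn0 mul1mx mulmx1.
by rewrite -mulmxA IH mulmxA CP addnS mulmxA.
Qed.

Lemma is_normZmx (Nv : 'cV[R]_d -> R) (q : R) (X : 'M[R]_d) v :
  is_norm Nv -> 0 <= q -> Nv ((q *: X) *m v) = q * Nv (X *m v).
Proof. by case=> _ _ NZ _ q0; rewrite -scalemxAl NZ ger0_norm. Qed.

Definition dichotomy_with C N (K a lam : R) (P : nat -> 'M[R]_d) : Prop :=
  [/\ 0 < K /\ 0 < lam /\ lam <= a,
      forall n, P n *m P n = P n,
      forall n, C n *m P n = P n.+1 *m C n &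
      forall (m n : nat) (x : 'cV[R]_d), (n <= m)%N ->
        [/\ N m (cocycle C m n *m (P n *m x))
              <= K * expR (- lam * (m - n)%:R) * N n x,
            N n (cocycle C n m *m ((1%:M - P m) *m x))
              <= K * expR (- lam * (m - n)%:R) * N m x,
            N m (cocycle C m n *m x) <= K * expR (a * (m - n)%:R) * N n x &
            N n (cocycle C n m *m x) <= K * expR (a * (m - n)%:R) * N m x]].

Definition bounded_orbit C N n : set 'cV[R]_d :=
  [set v | exists B : R, forall m, (n <= m)%N -> N m (cocycle C m n *m v) <= B].

Lemma expR_decay_eq0 (y c lam : R) : 0 <= y -> 0 < lam ->
  (forall k : nat, y <= c * expR (- lam * k%:R)) -> y = 0.
Proof.
move=> y0 lam0 decay; apply/eqP; rewrite eq_le y0 andbT leNgt; apply/negP=> ypos.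
have c0 : 0 <= c by have := decay 0%N; rewrite mulr0 expR0 mulr1; lra.
pose k := Num.bound (c / (lam * y)).
have ck : c < k%:R * (lam * y).
  rewrite -ltr_pdivrMr ?mulr_gt0 //; apply: archi_boundP.
  by rewrite divr_ge0 // mulr_ge0 // ltW.
have yexp : y * expR (lam * k%:R) <= c.
  by rewrite -ler_pdivlMr ?expR_gt0 // -expRN -mulNr; exact: decay.
have := expR_ge1Dx (lam * k%:R); nra.
Qed.

Section Dichotomy.
Variables (C : nat -> 'M[R]_d) (N : nat -> 'cV[R]_d -> R) (K a lam : R).
Variable P : nat -> 'M[R]_d.
Hypotheses (CU : forall j, C j \in unitmx) (NN : forall j, is_norm (N j)).
Hypothesis dichotomy : dichotomy_with C N K a lam P.

Lemma unstable_part_le n k v :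
  N n ((1%:M - P n) *m v)
  <= K * expR (- lam * k%:R) * N (n + k)%N (cocycle C (n + k) n *m v).
Proof.
case: dichotomy => _ _ CP bounds.
have [_ H2 _ _] := bounds (n + k)%N n (fwd C n k *m v) (leq_addr _ _).
rewrite addKn cocycle_bwd ?leq_addr // addKn in H2.
rewrite cocycle_fwd ?leq_addr // addKn.
suff -> : (1%:M - P n) *m v
          = bwd C n k *m ((1%:M - P (n + k)%N) *m (fwd C n k *m v)) by [].
have comm : (1%:M - P (n + k)%N) *m fwd C n k = fwd C n k *m (1%:M - P n).
  by rewrite mulmxBl mulmxBr mul1mx mulmx1 fwd_intertwine.
by rewrite (mulmxA (1%:M - _)) comm -(mulmxA (fwd C n k)) mulmxA mul_bwd_fwd // mul1mx.
Qed.

Lemma bounded_orbitE n : bounded_orbit C N n = [set v | (1%:M - P n) *m v = 0].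
Proof.
have [[K0 [lam0 _]] _ _ bounds] := dichotomy.
apply/seteqP; split => v /=.
- case=> B vB; have [N0 Ndef _ _] := NN n.
  apply: Ndef; apply: (expR_decay_eq0 (c := K * B) (N0 _) lam0) => k.
  apply: le_trans (unstable_part_le n k v) _.
  rewrite [leRHS]mulrAC; apply: ler_wpM2l; first by rewrite mulr_ge0 ?expR_ge0 ?ltW.
  exact/vB/leq_addr.
- move=> stable; exists (K * N n v) => m nm.
  have vP : v = P n *m v.
    by apply/eqP; rewrite -subr_eq0 -{1}[v]mul1mx -mulmxBl stable.
  have [H1 _ _ _] := bounds m n v nm; rewrite {1}vP; apply: le_trans H1 _.
  rewrite -mulrA; apply: ler_wpM2l; first exact: ltW.
  apply: ler_piMl; first by case: (NN n).
  by rewrite expR_le1 mulNr oppr_le0 mulr_ge0 // ltW.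
Qed.

End Dichotomy.

Lemma expR_bound_shift (q delta K M E x y : R) (k : nat) :
  0 <= q -> q <= expR delta -> 0 <= K -> 0 <= M -> 0 <= E -> x + delta <= y ->
  E <= K * expR (x * k%:R) * M -> q ^+ k * E <= K * expR (y * k%:R) * M.
Proof.
move=> q0 qd K0 M0 E0 xy HE.
have qk : q ^+ k <= expR (delta * k%:R).
  by rewrite expRM_natr; apply: lerXn2r => //; rewrite nnegrE ?expR_ge0.
apply: (@le_trans _ _ (expR (delta * k%:R) * (K * expR (x * k%:R) * M))).
  by apply: ler_pM => //; rewrite exprn_ge0.
have -> : expR (delta * k%:R) * (K * expR (x * k%:R) * M)
          = K * expR ((x + delta) * k%:R) * M by rewrite mulrDl expRD; ring.
apply: ler_wpM2r => //; apply: ler_wpM2l => //.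
by rewrite ler_expR ler_wpM2r.
Qed.

Lemma dichotomy_scale C N K a lam P (c delta : R) :
  (forall j, C j \in unitmx) -> (forall j, is_norm (N j)) ->
  0 < c -> 0 <= delta -> delta < lam -> c <= expR delta -> c^-1 <= expR delta ->
  dichotomy_with C N K a lam P ->
  dichotomy_with (fun j => c *: C j) N K (a + delta) (lam - delta) P.
Proof.
move=> CU NN c0 delta0 delta_lam cle cVle [[K0 [lam0 lam_a]] PP CP bounds].
split => //.
- by do !split => //; lra.
- by move=> n; rewrite -scalemxAl CP scalemxAr.
move=> m n x nm.
have -> : cocycle (fun j => c *: C j) m n = c ^+ (m - n) *: cocycle C m n.
  by rewrite !cocycle_fwd // fwdZ.
have -> : cocycle (fun j => c *: C j) n m = c^-1 ^+ (m - n) *: cocycle C n m.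
  by rewrite !cocycle_bwd // bwdZ // gt_eqF.
have N0 j y : 0 <= N j y by case: (NN j).
have c_ge0 : 0 <= c by exact: ltW.
have cV_ge0 : 0 <= c^-1 by rewrite invr_ge0.
have K_ge0 : 0 <= K by exact: ltW.
have lam_shift : - lam + delta <= - (lam - delta) by lra.
have [H1 H2 H3 H4] := bounds m n x nm.
rewrite !is_normZmx ?exprn_ge0 //; split.
- exact: expR_bound_shift c_ge0 cle K_ge0 (N0 _ _) (N0 _ _) lam_shift H1.
- exact: expR_bound_shift cV_ge0 cVle K_ge0 (N0 _ _) (N0 _ _) lam_shift H2.
- exact: expR_bound_shift c_ge0 cle K_ge0 (N0 _ _) (N0 _ _) (lexx _) H3.
- exact: expR_bound_shift cV_ge0 cVle K_ge0 (N0 _ _) (N0 _ _) (lexx _) H4.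
Qed.

End Cocycle.

Section Spectrum.
Variables (R : realType) (d : nat) (A : nat -> 'M[R]_d).
Variable N : nat -> 'cV[R]_d -> R.
Hypotheses (AU : forall j, A j \in unitmx) (NN : forall j, is_norm (N j)).

Let scaled (r : R) := fun j => r^-1 *: A j.

Lemma scaled_unitmx r : 0 < r -> forall j, scaled r j \in unitmx.
Proof. by move=> r0 j; rewrite unitmxZ ?AU // unitfE invr_eq0 gt_eqF. Qed.

Lemma SrE r n : 0 < r -> Sr A N r n = bounded_orbit (scaled r) N n.
Proof.
move=> r0.
have scaledE v m : (n <= m)%N ->
    r ^- (m - n) * N m (cocycle A m n *m v) = N m (cocycle (scaled r) m n *m v).
  move=> nm; rewrite !cocycle_fwd // fwdZ is_normZmx ?exprn_ge0 ?invr_ge0 ?ltW //.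
  by rewrite exprVn.
by apply/seteqP; split=> v [B vB]; exists B => m nm;
  [rewrite -scaledE // | rewrite scaledE //]; exact: vB.
Qed.

Lemma dichotomy_perturb r K a lam P r' : 0 < r ->
  dichotomy_with (scaled r) N K a lam P ->
  r * expR (- (lam / 2)) < r' -> r' < r * expR (lam / 2) ->
  dichotomy_with (scaled r') N K (a + lam / 2) (lam - lam / 2) P.
Proof.
move=> r0 dich lo hi.
have lam0 : 0 < lam by case: dich => -[_ []].
have E0 := expR_gt0 (lam / 2).
have r'0 : 0 < r' by apply: lt_trans lo; rewrite mulr_gt0 ?expR_gt0.
have -> : scaled r' = (fun j => (r / r') *: scaled r j).
  apply: boolp.funext => j; rewrite /scaled scalerA; congr (_ *: _).
  by field; apply/andP; split; rewrite gt_eqF.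
apply: dichotomy_scale dich => //; first exact: scaled_unitmx.
- by rewrite divr_gt0.
- lra.
- lra.
- rewrite expRN -(ltr_pM2r E0) -mulrA mulVf ?gt_eqF // mulr1 in lo.
  by rewrite ler_pdivrMr // mulrC ltW.
- by rewrite invf_div ler_pdivrMr // mulrC ltW.
Qed.

Lemma dichotomy_near r : 0 < r -> ~ SigmaED A N r ->
  exists (b c : R) (P : nat -> 'M[R]_d), [/\ 0 < b, b < r, r < c &
    forall r', b < r' -> r' < c ->
      exists K a lam, dichotomy_with (scaled r') N K a lam P].
Proof.
move=> r0 notSigma.
have [K [a [lam [P dich]]]] : strong_exp_dichotomy (scaled r) N.
  by apply: boolp.contrapT => noED; apply: notSigma.
have lam0 : 0 < lam by case: dich => -[_ []].
exists (r * expR (- (lam / 2))), (r * expR (lam / 2)), P; split.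
- by rewrite mulr_gt0 ?expR_gt0.
- by rewrite gtr_pMr // expR_lt1; lra.
- by rewrite ltr_pMr // expR_gt1; lra.
by move=> r' lo hi; do 3 eexists; exact: dichotomy_perturb dich lo hi.
Qed.

End Spectrum.

Theorem lemma7p3 (R : realType) (d : nat) (A : nat -> 'M[R]_d)
  (N : nat -> 'cV[R]_d -> R) :
  (forall n, A n \in unitmx) ->
  (forall n, is_norm (N n)) ->
  (exists K a : R, [/\ 0 < K, 0 < a &
     forall (m n : nat) (x : 'cV[R]_d), (n <= m)%N ->
       N m (cocycle A m n *m x) <= K * expR (a * (m - n)%:R) * N n x /\
       N n (cocycle A n m *m x) <= K * expR (a * (m - n)%:R) * N m x]) ->
  (* Sigma is closed in (0, +oo) *)
  (forall tau : R, 0 < tau ->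
     (forall eps : R, 0 < eps ->
        exists2 s, SigmaED A N s & `|s - tau| < eps) ->
     SigmaED A N tau) /\
  (* local constancy of S_r(n) off Sigma *)
  (forall r : R, 0 < r -> ~ SigmaED A N r ->
     exists b c : R, [/\ 0 < b, b < r, r < c &
       forall (n : nat) (r' : R), b < r' -> r' < c -> Sr A N r n = Sr A N r' n]).
Proof.
move=> AU NN _; split.
- move=> tau tau0 near_Sigma; apply: boolp.contrapT => notSigma.
  have [b [c [P [b0 btau tauc dich]]]] := dichotomy_near AU NN tau0 notSigma.
  have eps0 : 0 < Num.min (tau - b) (c - tau) by rewrite lt_min; apply/andP; lra.
  have eps_le : Num.min (tau - b) (c - tau) <= tau - b by rewrite ge_min lexx.
  have [s [_ sSigma]] := near_Sigma _ eps0.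
  rewrite ltr_norml lt_min => /andP[lo /andP[_ hi]].
  have [K [a [lam ?]]] := dich s ltac:(lra) ltac:(lra).
  by apply: sSigma; exists K, a, lam, P.
- move=> r r0 notSigma.
  have [b [c [P [b0 br rc dich]]]] := dichotomy_near AU NN r0 notSigma.
  exists b, c; split => // n r' lo hi.
  have [K [a [lam dich_r]]] := dich r br rc.
  have [K' [a' [lam' dich_r']]] := dich r' lo hi.
  have r'0 : 0 < r' by exact: lt_trans lo.
  rewrite !SrE //.
  rewrite (bounded_orbitE (scaled_unitmx AU r0) NN dich_r).
  by rewrite (bounded_orbitE (scaled_unitmx AU r'0) NN dich_r').
Qed.
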